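(* Let $d\ge2$, $n\ge1$, and $\gamma$ a positive conductivity on the lattice graph below. Then $T_2^{(t)}$ is injective for every $t$ with $d-1\le t\le dn-1$, and $T_2'^{(t)}$ is injective for every $t$ with $d\le t\le dn$.
   Context: Lattice: $D=\{x\in\mathbb Z^d:1\le x_i\le n\ \forall i\}$, $\partial D=\{p\in\mathbb Z^d:\min_{q\in D}\|q-p\|_{\ell^1}=1\}$; $E$ = unordered pairs $pq\subseteq D\cup\partial D$ with $\|p-q\|_{\ell^1}=1$, not both in $\partial D$; $\mathcal N(p)=\{q:pq\in E\}$; each $b\in\partial D$ has a unique neighbour $q_b\in D$. Conductivity $\gamma:E\to(0,\infty)$, symmetric. With $s(x)=\sum_ix_i$: $L_t=\{x\in D:s(x)=t\}$, $L_t^{\mathcal S}=\{x\in D:s(x)\le t\}$, $K_t^+=\{x\in\partial D:s(x)=t,\max_ix_i=n+1\}$, $K_t^-=\{x\in\partial D:s(x)=t,\min_ix_i=0\}$, $K_t^{\mathcal S\pm}=\bigcup_{\ell\le t}K_\ell^\pm$, $J_t^{\mathcal S}=K_t^{\mathcal S-}\cup K_{t+1}^{\mathcal S+}$. $T_2^{(t)}:\mathbb R^{L_{t+1}}\to\mathbb R^{\partial D\setminus J_t^{\mathcal S}}$: for $\mathbf y$, let $\mathbf w$ be the unique function on $(D\setminus L_t^{\mathcal S})\cup(\partial D\setminus J_t^{\mathcal S})$ with $\mathbf w=\mathbf y$ on $L_{t+1}$, $\mathbf w=0$ on $\partial D\setminus J_t^{\mathcal S}$, $\sum_{q\in\mathcal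 N(p)}\gamma_{pq}(\mathbf w_q-\mathbf w_p)=0$ for $p\in D\setminus L_{t+1}^{\mathcal S}$; $(T_2^{(t)}\mathbf y)_b=\gamma_{bq_b}(\mathbf w_{q_b}-\mathbf w_b)$. $T_2'^{(t)}:\mathbb R^{L_t}\to\mathbb R^{J_{t-1}^{\mathcal S}}$: for $\mathbf x$, let $\mathbf u$ be the unique function on $L_t^{\mathcal S}\cup J_{t-1}^{\mathcal S}$ with $\mathbf u=\mathbf x$ on $L_t$, $\mathbf u=0$ on $J_{t-1}^{\mathcal S}$, $\sum_{q\in\mathcal N(p)}\gamma_{pq}(\mathbf u_q-\mathbf u_p)=0$ for $p\in L_{t-1}^{\mathcal S}$; $(T_2'^{(t)}\mathbf x)_b=\gamma_{bq_b}(\mathbf u_{q_b}-\mathbf u_b)$. *)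

From mathcomp Require Import all_boot all_order all_algebra.
Set Implicit Arguments. Unset Strict Implicit. Unset Printing Implicit Defensive.
Import Order.TTheory GRing.Theory Num.Theory.

(* Points of Z^d are modelled inside the box {0,...,n+1}^d, which contains
   D ∪ ∂D and every edge of the graph. *)
Definition point (d n : nat) := {ffun 'I_d -> 'I_n.+2}.

Section Lattice.
Variables (d n : nat).
Local Notation P := (point d n).

Definition l1dist (p q : P) : nat :=
  \sum_(i < d) ((p i - q i) + (q i - p i))%N.

Definition ssum (x : P) : nat := \sum_(i < d) (x i : nat).

Definition inD (x : P) : bool := [forall i, (0 < x i) && (x i <= n)].

Definition inBd (p : P) : bool :=
  [exists q, inD q && (l1dist q p == 1%N)] &&
  [forall q, inD q ==> (1 <= l1dist q p)].

Definition edge (p q : P) : bool :=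
  [&& inD p || inBd p, inD q || inBd q, ~~ (inBd p && inBd q)
    & l1dist p q == 1%N].

(* q_b : the unique neighbour in D of b ∈ ∂D *)
Definition qb (b : P) : P := odflt b [pick q | edge b q].

Definition inL (t : nat) (x : P) : bool := inD x && (ssum x == t).
Definition inLS (t : nat) (x : P) : bool := inD x && (ssum x <= t).
Definition inKplus (t : nat) (x : P) : bool :=
  [&& inBd x, ssum x == t & [exists i, (x i : nat) == n.+1]].
Definition inKminus (t : nat) (x : P) : bool :=
  [&& inBd x, ssum x == t & [exists i, (x i : nat) == 0%N]].
Definition inKSplus (t : nat) (x : P) : bool :=
  [&& inBd x, ssum x <= t & [exists i, (x i : nat) == n.+1]].
Definition inKSminus (t : nat) (x : P) : bool :=
  [&& inBd x, ssum x <= t & [exists i, (x i : nat) == 0%N]].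
Definition inJS (t : nat) (x : P) : bool := inKSminus t x || inKSplus t.+1 x.

Variable R : realFieldType.
Variable gam : P -> P -> R.

Definition lapl (w : P -> R) (p : P) : R :=
  (\sum_(q | edge p q) gam p q * (w q - w p))%R.

Definition flux (w : P -> R) (b : P) : R := (gam b (qb b) * (w (qb b) - w b))%R.

(* The graph of T_2^{(t)}: z = T_2^{(t)} y, with w the harmonic extension. *)
Definition T2_graph (t : nat) (y z : P -> R) : Prop :=
  exists w : P -> R,
    [/\ forall p, inL t.+1 p -> w p = y p,
        forall p, inBd p -> ~~ inJS t p -> w p = 0%R,
        forall p, inD p -> t.+1 < ssum p -> lapl w p = 0%R
      & forall b, inBd b -> ~~ inJS t b -> z b = flux w b].

Definition T2'_graph (t : nat) (x z : P -> R) : Prop :=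
  exists u : P -> R,
    [/\ forall p, inL t p -> u p = x p,
        forall p, inJS t.-1 p -> u p = 0%R,
        forall p, inLS t.-1 p -> lapl u p = 0%R
      & forall b, inJS t.-1 b -> z b = flux u b].

End Lattice.

(* Compare two solutions with the same data and fix a coordinate direction e.
   For T_2 sweep {s > t} against e, starting from the face x_e = n + 1: a
   point q with q + e on that face is determined by the flux through q + e,
   where both solutions vanish; any other q is determined by the harmonic
   equation at q + e, all of whose other neighbours lie further along e or on
   the part of the boundary outside J_t, where both solutions vanish again.
   For T_2' sweep {s <= t} along e from the face x_e = 0 in the same way, the
   boundary neighbours met on the way now lying in J_(t-1). *)

From mathcomp Require Import all_boot all_order all_algebra.
From mathcomp Require Import zify.
Set Implicit Arguments. Unset Strict Implicit. Unset Printing Implicit Defensive.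
Import Order.TTheory GRing.Theory Num.Theory.

Section Lattice.
Variables d n : nat.
Implicit Types p q r b : point d n.

Lemma l1dist_sym p q : l1dist p q = l1dist q p.
Proof. by apply: eq_bigr => i _; rewrite addnC. Qed.

Lemma l1dist_eq0 p q : (l1dist p q == 0) = (p == q).
Proof.
rewrite sum_nat_eq0; apply/forallP/eqP => [E|-> i]; last by rewrite subnn.
by apply/ffunP => i; apply/val_inj; move: (E i) => /= /eqP; lia.
Qed.

Lemma coord_le_l1dist p q i : p i <= q i + l1dist p q.
Proof. rewrite /l1dist (bigD1 i) //=; set S := (\sum_(_ | _) _); lia. Qed.

Lemma ssum_le_l1dist p q : ssum p <= ssum q + l1dist p q.
Proof.
by rewrite /ssum /l1dist -big_split; apply: leq_sum => i _ /=; lia.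
Qed.

Lemma ssum_single p q j : (forall i, i != j -> q i = p i) ->
  ssum q + p j = ssum p + q j.
Proof.
move=> Eq; rewrite /ssum [in LHS](bigD1 j) // [in RHS](bigD1 j) //=.
rewrite (eq_bigr (fun i => p i : nat)) => [|i /Eq ->] //.
by set S := (\sum_(i | _) _); rewrite -/S; lia.
Qed.

Lemma l1dist1P p q : l1dist p q = 1 -> exists j,
  (q j = (p j).+1 :> nat \/ p j = (q j).+1 :> nat) /\ forall i, i != j -> q i = p i.
Proof.
move/eqP/sum_nat_eq1 => [j [_ Ej E0]]; exists j; split; first lia.
by move=> i /E0 /(_ isT) Ei; apply/val_inj => /=; lia.
Qed.

Lemma eq_of_l1dist1 p q r j : l1dist p q = 1 -> l1dist p r = 1 ->
  (q j : nat) != p j -> (r j : nat) = q j -> r = q.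
Proof.
move=> /l1dist1P [k [_ Eq]] /l1dist1P [l [_ Er]] Nqj Erj.
have Nrj : (r j : nat) != p j by rewrite Erj.
have Ejk : j = k by apply/eqP; apply: contraNT Nqj => /Eq ->.
have Ejl : j = l by apply/eqP; apply: contraNT Nrj => /Er ->.
apply/ffunP => i; case: (eqVneq i j) => [->|Nij]; first exact: val_inj.
by rewrite Eq -?Ejk // Er -?Ejl.
Qed.

Lemma ssum_neighbour p r k : l1dist p r = 1 -> p k < r k -> ssum r = (ssum p).+1.
Proof.
move=> /l1dist1P [j [Ej Er]] Ltk; have Ekj : k = j.
  by apply/eqP; apply: contraTT Ltk => /Er ->; rewrite ltnn.
subst k; have := ssum_single Er; lia.
Qed.

Lemma inD_coord q i : inD q -> 0 < q i <= n.
Proof. by move/forallP. Qed.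

Lemma notinD q : ~~ inD q -> exists i, (q i : nat) = 0 \/ (q i : nat) = n.+1.
Proof.
rewrite negb_forall => /existsP [i Ni]; exists i.
by have := ltn_ord (q i); move: Ni; rewrite negb_and -!ltnNge; lia.
Qed.

Lemma inBd_notD b : inBd b -> ~~ inD b.
Proof.
case/andP=> _ /forallP B; apply/negP => Db.
by move: (B b); rewrite Db /= lt0n l1dist_eq0 eqxx.
Qed.

Lemma inBd_neighbour p r : inD p -> l1dist p r = 1 -> ~~ inD r -> inBd r.
Proof.
move=> Dp Lpr Nr; apply/andP; split.
  by apply/existsP; exists p; rewrite Dp Lpr.
apply/forallP => q; apply/implyP => Dq; rewrite lt0n l1dist_eq0.
by apply: contraNneq Nr => <-.
Qed.

Lemma edge_inD p q : inD p -> inD q -> l1dist p q = 1 -> edge p q.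
Proof.
move=> Dp Dq Lpq.
by rewrite /edge Dp Dq (negbTE (contraL (@inBd_notD _) Dp)) Lpq.
Qed.

Lemma edge_inBd b q : inBd b -> inD q -> l1dist b q = 1 -> edge b q.
Proof.
move=> Bb Dq Lbq.
by rewrite /edge Bb Dq orbT (negbTE (contraL (@inBd_notD _) Dq)) andbF Lbq.
Qed.

Lemma edgeP p r : edge p r -> (inD r || inBd r) /\ l1dist p r = 1.
Proof. by case/and4P => _ -> _ /eqP. Qed.

Lemma edge_from_bd b r : inBd b -> edge b r -> inD r /\ l1dist b r = 1.
Proof.
move=> Bb /and4P [_ DBr NBr /eqP Lbr]; split=> //.
by move: NBr DBr; rewrite Bb /= => /negbTE ->; rewrite orbF.
Qed.

Lemma bd_neighbour_unique b q r : inBd b -> inD q -> inD r ->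
  l1dist b q = 1 -> l1dist b r = 1 -> r = q.
Proof.
move=> /inBd_notD /notinD [k Bk] Dq Dr Lbq Lbr.
have Lqb : l1dist q b = 1 by rewrite l1dist_sym.
have Lrb : l1dist r b = 1 by rewrite l1dist_sym.
have := coord_le_l1dist b q k; have := coord_le_l1dist q b k.
have := coord_le_l1dist b r k; have := coord_le_l1dist r b k.
have := inD_coord k Dq; have := inD_coord k Dr.
rewrite Lbq Lqb Lbr Lrb => *.
by apply: (eq_of_l1dist1 (j := k)) Lbq Lbr _ _; lia.
Qed.

Lemma qb_bd b q : inBd b -> edge b q -> qb b = q.
Proof.
move=> Bb Ebq; rewrite /qb; case: pickP => [r Ebr|/(_ q)] /=; last by rewrite Ebq.
have [Dq Lbq] := edge_from_bd Bb Ebq; have [Dr Lbr] := edge_from_bd Bb Ebr.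
exact: bd_neighbour_unique Lbq Lbr.
Qed.

Definition shift q j k : point d n := [ffun i => if i == j then inord k else q i].

Lemma shift_at q j k : k <= n.+1 -> shift q j k j = k :> nat.
Proof. by move=> Lk; rewrite ffunE eqxx inordK. Qed.

Lemma shift_off q j k i : i != j -> shift q j k i = q i.
Proof. by move=> /negbTE Nij; rewrite ffunE Nij. Qed.

Lemma l1dist_shift q j k : k <= n.+1 -> (k = (q j).+1 \/ q j = k.+1 :> nat) ->
  l1dist q (shift q j k) = 1.
Proof.
move=> Lk Ek; rewrite /l1dist (bigD1 j) //= shift_at // big1 => [|i /shift_off ->].
  lia.
by rewrite subnn.
Qed.

Lemma ssum_shift q j k : k <= n.+1 -> ssum (shift q j k) + q j = ssum q + k.
Proof.
move=> Lk; rewrite -[in RHS](shift_at q j Lk).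
by apply: ssum_single => i; exact: shift_off.
Qed.

Lemma inD_shift q j k : inD q -> 0 < k <= n -> inD (shift q j k).
Proof.
move=> Dq Lk; apply/forallP => i; case: (eqVneq i j) => [->|Nij].
  by rewrite shift_at //; lia.
by rewrite shift_off //; exact: inD_coord.
Qed.

End Lattice.

Section Conductivity.
Variables (d n : nat) (R : realFieldType) (gam : point d n -> point d n -> R).
Hypothesis gam_gt0 : forall p q, edge p q -> (0 < gam p q)%R.
Implicit Types (p q r b : point d n) (w : point d n -> R).

Lemma flux_cancel w1 w2 b q : inBd b -> edge b q -> w1 b = w2 b ->
  flux gam w1 b = flux gam w2 b -> w1 q = w2 q.
Proof.
move=> Bb Ebq Eb; rewrite /flux (qb_bd Bb Ebq) Eb.
by move/(mulfI (lt0r_neq0 (gam_gt0 Ebq)))/addIr.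
Qed.

Lemma lapl_cancel w1 w2 p q : edge p q -> w1 p = w2 p ->
  (forall r, edge p r -> r != q -> w1 r = w2 r) ->
  lapl gam w1 p = lapl gam w2 p -> w1 q = w2 q.
Proof.
move=> Epq Ep Eo; rewrite /lapl (bigD1 q) //= [X in _ = X -> _](bigD1 q) //= Ep.
rewrite (eq_bigr (fun r => gam p r * (w2 r - w2 p)))%R => [|r /andP [Epr Nrq]].
  by move/addIr/(mulfI (lt0r_neq0 (gam_gt0 Epq)))/addIr.
by rewrite Eo.
Qed.

Lemma T2_graph_inj (i0 : 'I_d) t y1 y2 z1 z2 :
  T2_graph gam t y1 z1 -> T2_graph gam t y2 z2 ->
  {in [pred b | inBd b && ~~ inJS t b], z1 =1 z2} -> {in inL t.+1, y1 =1 y2}.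
Proof.
case=> w1 [Ey1 Bd1 H1 Fl1] [w2 [Ey2 Bd2 H2 Fl2]] Ez.
have Ebd b : inBd b -> ~~ inJS t b -> w1 b = w2 b by move=> Bb Jb; rewrite Bd1 ?Bd2.
suff Ew q : inD q -> t < ssum q -> w1 q = w2 q.
  by move=> q Lq; have /andP [Dq /eqP Sq] := Lq; rewrite -Ey1 // -Ey2 // Ew ?Sq.
move Ek : (n - q i0) => k; elim/ltn_ind: k q Ek => k IH q Ek Dq Sq.
have q0n := inD_coord i0 Dq.
have [qn|qn] : q i0 = n :> nat \/ q i0 < n by lia.
- set b := shift q i0 n.+1.
  have Lqb : l1dist q b = 1 by apply: l1dist_shift; lia.
  have Bb : inBd b.
    apply: inBd_neighbour Dq Lqb _; apply/negP => /(inD_coord i0).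
    by rewrite /b shift_at //; lia.
  have Sb : ssum b + q i0 = ssum q + n.+1 := ssum_shift q i0 (leqnn _).
  have Jb : ~~ inJS t b by apply/negP; case/orP => /and3P [_ Sb_le _]; lia.
  have Ebq : edge b q by apply: edge_inBd; rewrite // l1dist_sym.
  apply: (flux_cancel Bb Ebq (Ebd _ Bb Jb)).
  by rewrite -Fl1 // -Fl2 // Ez // inE Bb.
- set p := shift q i0 (q i0).+1.
  have Lpq : l1dist p q = 1 by rewrite l1dist_sym; apply: l1dist_shift; lia.
  have Dp : inD p by apply: inD_shift; lia.
  have Sp : ssum p + q i0 = ssum q + (q i0).+1 by apply: ssum_shift; lia.
  have p0 : p i0 = (q i0).+1 :> nat by rewrite shift_at //; lia.
  apply: (lapl_cancel (edge_inD Dp Dq Lpq)).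
  + by apply: (IH (n - p i0)) => //; lia.
  + move=> r /edgeP [/orP [Dr|Br] Lpr] Nrq.
      have Nr0 : (r i0 : nat) != q i0.
        by apply: contra_neq Nrq => Er; apply: (eq_of_l1dist1 Lpq Lpr _ Er); lia.
      have := coord_le_l1dist p r i0; have := ssum_le_l1dist p r; rewrite Lpr => *.
      by apply: (IH (n - r i0)) => //; lia.
    apply: Ebd Br _; rewrite negb_or; apply/andP; split.
      by apply/negP => /and3P [_ Sr _]; have := ssum_le_l1dist p r; lia.
    apply/negP => /and3P [_ Sr /existsP [j /eqP rj]].
    have := inD_coord j Dp; have := ssum_neighbour (k := j) Lpr; lia.
  + by rewrite H1 ?H2 //; lia.
Qed.

Lemma T2'_graph_inj (i0 : 'I_d) t x1 x2 z1 z2 :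
  T2'_graph gam t x1 z1 -> T2'_graph gam t x2 z2 ->
  {in inJS t.-1, z1 =1 z2} -> {in inL t, x1 =1 x2}.
Proof.
case=> u1 [Ex1 Bd1 H1 Fl1] [u2 [Ex2 Bd2 H2 Fl2]] Ez.
have Ebd b : inJS t.-1 b -> u1 b = u2 b by move=> Jb; rewrite Bd1 ?Bd2.
suff Eu q : inD q -> ssum q <= t -> u1 q = u2 q.
  by move=> q Lq; have /andP [Dq /eqP Sq] := Lq; rewrite -Ex1 // -Ex2 // Eu ?Sq.
move Ek : (q i0 : nat) => k; elim/ltn_ind: k q Ek => k IH q Ek Dq Sq.
have q0n := inD_coord i0 Dq.
have [q1|q1] : q i0 = 1 :> nat \/ 1 < q i0 by lia.
- set b := shift q i0 0.
  have Lqb : l1dist q b = 1 by apply: l1dist_shift; lia.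
  have Bb : inBd b.
    apply: inBd_neighbour Dq Lqb _; apply/negP => /(inD_coord i0).
    by rewrite /b shift_at //; lia.
  have Sb : ssum b + q i0 = ssum q + 0 := ssum_shift q i0 (leq0n _).
  have Jb : inJS t.-1 b.
    apply/orP; left; apply/and3P; split=> //; first lia.
    by apply/existsP; exists i0; rewrite shift_at.
  have Ebq : edge b q by apply: edge_inBd; rewrite // l1dist_sym.
  apply: (flux_cancel Bb Ebq (Ebd _ Jb)).
  by rewrite -Fl1 // -Fl2 // Ez.
- set p := shift q i0 (q i0).-1.
  have Lpq : l1dist p q = 1 by rewrite l1dist_sym; apply: l1dist_shift; lia.
  have Dp : inD p by apply: inD_shift; lia.
  have Sp : ssum p + q i0 = ssum q + (q i0).-1 by apply: ssum_shift; lia.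
  have p0 : p i0 = (q i0).-1 :> nat by rewrite shift_at //; lia.
  apply: (lapl_cancel (edge_inD Dp Dq Lpq)).
  + by apply: (IH (p i0)) => //; lia.
  + move=> r /edgeP [/orP [Dr|Br] Lpr] Nrq.
      have Nr0 : (r i0 : nat) != q i0.
        by apply: contra_neq Nrq => Er; apply: (eq_of_l1dist1 Lpq Lpr _ Er); lia.
      have Lrp : l1dist r p = 1 by rewrite l1dist_sym.
      have := coord_le_l1dist r p i0; have := ssum_le_l1dist r p; rewrite Lrp => *.
      by apply: (IH (r i0)) => //; lia.
    apply: Ebd; have [j [rj|rj]] := notinD (inBd_notD Br); apply/orP; [left|right].
      have Lrp : l1dist r p = 1 by rewrite l1dist_sym.
      have := inD_coord j Dp; have := ssum_neighbour (k := j) Lrp.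
      move=> *; apply/and3P; split=> //; first lia.
      by apply/existsP; exists j; rewrite rj.
    have := inD_coord j Dp; have := ssum_neighbour (k := j) Lpr.
    move=> *; apply/and3P; split=> //; first lia.
    by apply/existsP; exists j; rewrite rj.
  + by rewrite H1 ?H2 //; apply/andP; split=> //; lia.
Qed.

End Conductivity.

Theorem proposition3p3 (d n : nat) (R : realFieldType)
    (gam : point d n -> point d n -> R) :
  (2 <= d)%N -> (1 <= n)%N ->
  (forall p q, edge p q -> (0 < gam p q)%R) ->
  (forall p q, edge p q -> gam p q = gam q p) ->
  (forall t : nat, (d - 1 <= t <= d * n - 1)%N ->
     forall y1 y2 z1 z2 : point d n -> R,
       T2_graph gam t y1 z1 -> T2_graph gam t y2 z2 ->
       {in [pred b | inBd b && ~~ inJS t b], z1 =1 z2} ->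
       {in inL t.+1, y1 =1 y2})
  /\
  (forall t : nat, (d <= t <= d * n)%N ->
     forall x1 x2 z1 z2 : point d n -> R,
       T2'_graph gam t x1 z1 -> T2'_graph gam t x2 z2 ->
       {in inJS t.-1, z1 =1 z2} ->
       {in inL t, x1 =1 x2}).
Proof.
move=> d2 _ gam_gt0 _; pose i0 : 'I_d := Ordinal (leq_trans (isT : 0 < 2) d2).
split=> t _.
- exact: (T2_graph_inj gam_gt0 i0).
- exact: (T2'_graph_inj gam_gt0 i0).
Qed.
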